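(* Let $\mathcal C$ be a collective choice problem satisfying Generic Finite Alternatives. For the amendment procedure with $T$ rounds and initial default $x^0$, the equilibrium outcome correspondence satisfies $f_T(x^0)=\{\phi^T(x^0)\}$. Moreover: (a) There exists a pure-strategy equilibrium in which (i) the agenda setter always proposes $\phi(x)$ when the current default is $x$, and (ii) each voter $i$ votes to approve proposal $y$ in round $t$ if and only if $\phi^{T-t}(y)\succsim_i\phi^{T-t}(x^{t-1})$, where $x^{t-1}$ is the current default. (b) For an initial default $x^0$, $f_T(x^0)=\{x^0\}$ if and only if $x^0\in E$. (c) If $T\ge |X|-1$, then $\bigcup_{x^0\in X}f_T(x^0)=E$.
   Context: Collective choice problem: voters $N=\{1,\dots,n\}$ ($n$ odd) and a non-voting agenda setter $A$ choose from a policy space $X$; each player $i\in N\cup\{A\}$ has a complete, transitive preference $\succsim_i$ with utility representation $u_i$. $x\succ_M y$ means a strict majority of voters strictly prefer $x$ to $y$. Generic Finite Alternatives: $X$ is finite and all preferences are antisymmetric. Define $M(x)=\{y\in X: y\succ_M x \text{ or } y=x\}$, the agenda setter's favorite improvement map $\phi:X\to X$ by $\{\phi(x)\}=\arg\max_{y\in M(x)}u_A(y)$, $\phi^t$ its $t$-fold iterate ($\phi^0$ the identity), and $E=\{x\in X: x=\phi(x)\}$. Amendment procedure with $T$ rounds: initial default $x^0$; in each round $t$ the agenda setter proposes $a^t\in X$, voted against the default $x^{t-1}$ by simple majority; $x^t=a^t$ if it passes and $x^t=x^{t-1}$ otherwise; $x^T$ is implemented. Strategies may depend on the full history and may be mixed.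 Equilibrium: subgame perfect equilibrium with as-if-pivotal voting (at histories where passage leads to continuation outcome $x$ and rejection to $y$ regardless of the vote composition, voters with a strict preference between $x$ and $y$ vote for the option leading to the preferred one). $f_T(x^0)$ denotes the set of policies implemented with positive probability in some equilibrium of the $T$-round game with initial default $x^0$. *)

From HB Require Import structures.
From mathcomp Require Import all_boot all_order all_algebra.
From mathcomp Require Import reals.
Set Implicit Arguments. Unset Strict Implicit. Unset Printing Implicit Defensive.
Import Order.TTheory GRing.Theory Num.Theory.
Local Open Scope ring_scope.

Section Amendment.
Variables (R : realType) (X : finType) (n : nat).
(* utilities of the voters ('I_n) and of the agenda setter *)
Variables (u : 'I_n -> X -> R) (uA : X -> R).

Definition maj (y x : X) : bool := (n < 2 * #|[set i | (u i x < u i y)%R]|)%N.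

Definition Mset (x : X) : pred X := [pred y | maj y x || (y == x)].

(* favourite improvement map: the u_A-maximiser of M(x) (unique when u_A is injective) *)
Definition phi (x : X) : X := [arg max_(y > x in Mset x) uA y]%O.

Definition Eset : {set X} := [set x | phi x == x].

Definition vprofile := {ffun 'I_n -> bool}.
(* one completed round: (proposal, vote profile) *)
Definition history := seq (X * vprofile).

Definition passes (v : vprofile) : bool := (n < 2 * #|[set i | v i]|)%N.

Definition default (x0 : X) (h : history) : X :=
  foldl (fun x p => if passes p.2 then p.1 else x) x0 h.

(* behaviour strategy profile: setter mixes over proposals at each history;
   voter i approves proposal a at history h with probability sV i h a *)
Record strat := Strat {
  sA : history -> X -> R ;
  sV : 'I_n -> history -> X -> R }.

Definition valid_sA (f : history -> X -> R) : Prop :=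
  forall h, (forall x, 0 <= f h x) /\ \sum_x f h x = 1.
Definition valid_sV (g : history -> X -> R) : Prop :=
  forall h a, 0 <= g h a <= 1.
Definition valid (s : strat) : Prop :=
  valid_sA (sA s) /\ forall i, valid_sV (sV s i).

Definition vprob (s : strat) (h : history) (a : X) (v : vprofile) : R :=
  \prod_i (if v i then sV s i h a else 1 - sV s i h a).

(* distribution of the implemented policy, starting at history h
   (beginning of a round) with k rounds remaining *)
Fixpoint node_val (x0 : X) (s : strat) (h : history) (k : nat) : X -> R :=
  match k with
  | 0 => fun x => (x == default x0 h)%:R
  | k'.+1 => fun x =>
      \sum_a sA s h a *
        \sum_(v : vprofile) vprob s h a v * node_val x0 s (rcons h (a, v)) k' x
  end.

(* distribution of the implemented policy at the voting node following
   proposal a at history h, with k rounds remaining after this vote *)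
Definition vote_val (x0 : X) (s : strat) (h : history) (a : X) (k : nat) : X -> R :=
  fun x => \sum_(v : vprofile) vprob s h a v * node_val x0 s (rcons h (a, v)) k x.

Definition EU (w : X -> R) (d : X -> R) : R := \sum_x d x * w x.

Definition setA (s : strat) (f : history -> X -> R) : strat := Strat f (sV s).
Definition setV (s : strat) (i : 'I_n) (g : history -> X -> R) : strat :=
  Strat (sA s) (fun j => if j == i then g else sV s j).

(* subgame perfection: no profitable deviation (to any strategy) by any
   player in any subgame, i.e. at any history of a round t <= T, either
   before the proposal or after any proposal *)
Definition SPE (x0 : X) (T : nat) (s : strat) : Prop :=
  valid s /\
  (forall h : history, (size h < T)%N ->
     forall f, valid_sA f ->
       EU uA (node_val x0 (setA s f) h (T - size h)) <= EU uA (node_val x0 s h (T - size h)) /\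
       forall a, EU uA (vote_val x0 (setA s f) h a (T - size h - 1))
                   <= EU uA (vote_val x0 s h a (T - size h - 1))) /\
  (forall h : history, (size h < T)%N ->
     forall i g, valid_sV g ->
       EU (u i) (node_val x0 (setV s i g) h (T - size h))
         <= EU (u i) (node_val x0 s h (T - size h)) /\
       forall a, EU (u i) (vote_val x0 (setV s i g) h a (T - size h - 1))
                   <= EU (u i) (vote_val x0 s h a (T - size h - 1))).

(* as-if-pivotal voting: if passage leads (for every vote composition) to the
   continuation outcome x and rejection (for every vote composition) to y,
   voters with a strict preference vote for the option leading to the
   preferred one *)
Definition as_if_pivotal (x0 : X) (T : nat) (s : strat) : Prop :=
  forall h : history, (size h < T)%N -> forall a x y : X,
    (forall v, passes v -> forall z,
        node_val x0 s (rcons h (a, v)) (T - size h - 1) z = (z == x)%:R) ->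
    (forall v, ~~ passes v -> forall z,
        node_val x0 s (rcons h (a, v)) (T - size h - 1) z = (z == y)%:R) ->
    forall i, (u i y < u i x -> sV s i h a = 1) /\ (u i x < u i y -> sV s i h a = 0).

Definition equilibrium (x0 : X) (T : nat) (s : strat) : Prop :=
  SPE x0 T s /\ as_if_pivotal x0 T s.

Definition fT (T : nat) (x0 : X) (x : X) : Prop :=
  exists s, equilibrium x0 T s /\ 0 < node_val x0 s [::] T x.

End Amendment.

From Pilot Require Import Defs.
From HB Require Import structures.
From mathcomp Require Import all_boot all_order all_algebra.
From mathcomp Require Import reals.
From mathcomp Require Import zify.
Set Implicit Arguments. Unset Strict Implicit. Unset Printing Implicit Defensive.
Import Order.TTheory GRing.Theory Num.Theory.
Local Open Scope ring_scope.

(* Backward induction on the number k of remaining rounds shows that in every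
   equilibrium the outcome reached from a round with default y is phi^k(y).
   Given that, a vote on a proposal a against the default d decides between
   phi^k(a) and phi^k(d), so as-if-pivotal voters vote sincerely between these
   two and the result is their majority winner, an element of M(phi^k(d)).
   Proposing phi(d) thus yields phi^(k+1)(d), the setter's favourite element
   of M(phi^k(d)); no proposal yields more, and since u_A is injective every
   proposal she makes with positive probability yields exactly phi^(k+1)(d).
   Conversely the profile of (a) attains these outcomes, and it is immune to
   deviations: a single voter changes the result of a vote only when she is
   pivotal, and then only against her own sincere vote.
   For (b) and (c), u_A strictly increases along a phi-orbit until it reaches a
   fixed point, so phi^T(x0) = x0 with T > 0 forces x0 in E, and on a finite X
   every orbit becomes stationary after at most |X| - 1 steps. *)

Section ConvexCombination.
Variables (R : numDomainType) (J : finType).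

Lemma sum_indicator_mull (j0 : J) (F : J -> R) : \sum_j (j == j0)%:R * F j = F j0.
Proof.
by rewrite (bigD1 j0) //= eqxx mul1r big1 ?addr0 // => j /negbTE ->; rewrite mul0r.
Qed.

Variables (c F : J -> R) (M : R).
Hypotheses (c_ge0 : forall j, 0 <= c j) (c_sum1 : \sum_j c j = 1).

Lemma convex_le : (forall j, c j != 0 -> F j <= M) -> \sum_j c j * F j <= M.
Proof.
move=> FM; apply: le_trans (_ : \sum_j c j * M <= M); last by rewrite -mulr_suml c_sum1 mul1r.
apply: ler_sum => j _; have [->|nz] := eqVneq (c j) 0; first by rewrite !mul0r.
by rewrite ler_wpM2l ?FM.
Qed.

Lemma convex_ge_max : (forall j, F j <= M) -> M <= \sum_j c j * F j ->
  forall j, c j != 0 -> F j = M.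
Proof.
move=> FM Mle j nz.
have gap_ge0 j' : true -> 0 <= c j' * (M - F j') by rewrite mulr_ge0 ?subr_ge0.
have gap_sum0 : \sum_j' c j' * (M - F j') = 0.
  apply/eqP; rewrite eq_le sumr_ge0 // andbT.
  by under eq_bigr do rewrite mulrBr; rewrite sumrB -mulr_suml c_sum1 mul1r subr_le0.
have /eqP := psumr_eq0P gap_ge0 gap_sum0 (i := j) isT.
by rewrite mulf_eq0 (negbTE nz) subr_eq0 => /eqP.
Qed.

End ConvexCombination.

Section IndependentVotes.
Variables (R : numDomainType) (I : finType) (p : I -> R).

Definition bernoulli_prod (v : {ffun I -> bool}) : R :=
  \prod_i (if v i then p i else 1 - p i).

Lemma sum_bernoulli_prod : \sum_v bernoulli_prod v = 1.
Proof.
rewrite -(bigA_distr_bigA (fun i (b : bool) => if b then p i else 1 - p i)) /=.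
by apply: big1 => i _; rewrite big_bool /= addrC subrK.
Qed.

Lemma bernoulli_prod_ge0 v : (forall i, 0 <= p i <= 1) -> 0 <= bernoulli_prod v.
Proof.
move=> p01; apply: prodr_ge0 => i _; have /andP[p0 p1] := p01 i.
by case: (v i); rewrite ?subr_ge0.
Qed.

Lemma bernoulli_prod_off (v0 v : {ffun I -> bool}) i :
  p i = (v0 i)%:R -> v i != v0 i -> bernoulli_prod v = 0.
Proof.
move=> pi vi; rewrite /bernoulli_prod (bigD1 i) //= pi.
by move: vi; case: (v i); case: (v0 i); rewrite //= ?subrr mul0r.
Qed.

Lemma bernoulli_prod_pure (v0 : {ffun I -> bool}) : (forall i, p i = (v0 i)%:R) ->
  forall v, bernoulli_prod v = (v == v0)%:R.
Proof.
move=> pv0 v; have [->|] := eqVneq v v0.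
  by apply: big1 => i _; rewrite pv0; case: (v0 i); rewrite ?subr0.
move=> v_neq; have /existsP [i vi] : [exists i, v i != v0 i].
  apply: contraNT v_neq; rewrite negb_exists => /forallP same.
  by apply/eqP/ffunP => i; apply/eqP; apply: negbNE (same i).
exact: bernoulli_prod_off (pv0 i) vi.
Qed.

Lemma bernoulli_prod_neq0 i (v0 v : {ffun I -> bool}) :
  (forall j, j != i -> p j = (v0 j)%:R) ->
  bernoulli_prod v != 0 -> forall j, j != i -> v j = v0 j.
Proof.
move=> pv0 nz j ji; apply/eqP; apply: contraNT nz => vj.
by rewrite (bernoulli_prod_off (pv0 j ji) vj).
Qed.

End IndependentVotes.

Section Potential.
Variables (d : Order.disp_t) (O : porderType d) (Y : finType).
Variables (f : Y -> Y) (g : Y -> O).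
Hypothesis f_increasing : forall x, f x != x -> (g x < g (f x))%O.

Lemma le_potential_f x : (g x <= g (f x))%O.
Proof. by have [->|/f_increasing/ltW] := eqVneq (f x) x. Qed.

Lemma le_potential_iter k x : (g x <= g (iter k f x))%O.
Proof. by elim: k => [|k IHk] //=; apply: le_trans IHk (le_potential_f _). Qed.

Lemma iter_eq_fixed k x : (0 < k)%N -> iter k f x = x -> f x = x.
Proof.
case: k => // k _ fix_x; apply/eqP; apply: contraTT isT => /f_increasing gfx.
have := le_potential_iter k (f x); rewrite -iterSr fix_x.
by rewrite (lt_geF gfx).
Qed.

Lemma iter_card_fixed k x : (#|Y| - 1 <= k)%N -> f (iter k f x) = iter k f x.
Proof.
move=> Yk; pose orb (j : 'I_#|Y|.+1) := iter j f x.
have /injectivePn [j1 [j2 j12 orb12]] : ~~ injectiveb orb.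
  by apply/negP => /injectiveP/leq_card; rewrite card_ord ltnn.
wlog lt12 : j1 j2 j12 orb12 / (j1 < j2)%N.
  move=> wlog_lt; have [lt12|lt21|/val_inj eq12] := ltngtP j1 j2.
  - exact: wlog_lt lt12.
  - by apply: (wlog_lt j2 j1) => //; rewrite eq_sym.
  - by rewrite eq12 eqxx in j12.
have fixed_j1 : f (iter j1 f x) = iter j1 f x.
  apply: (@iter_eq_fixed (j2 - j1) (iter j1 f x)); first by rewrite subn_gt0.
  by rewrite -iterD subnK ?(ltnW lt12) // orb12.
have j1k : (j1 <= k)%N by have := ltn_ord j2; lia.
by rewrite -(subnK j1k) iterD iter_fix.
Qed.

End Potential.

Section Majority.
Variable n : nat.

Lemma passes_mono (v w : vprofile n) : (forall j, v j -> w j) -> passes v -> passes w.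
Proof.
move=> vw; rewrite /passes => /leq_trans; apply; rewrite leq_mul2l /=.
by apply/subset_leq_card/subsetP => j; rewrite !inE; apply: vw.
Qed.

Lemma pivotal_voter (v w : vprofile n) i : (forall j, j != i -> v j = w j) ->
  passes v -> ~~ passes w -> v i && ~~ w i.
Proof.
move=> vw pass_v; apply: contraNT; rewrite negb_and negbK => vi_wi.
apply: passes_mono pass_v => j; have [->|ji] := eqVneq j i; last by rewrite vw.
by case/orP: vi_wi => [/negbTE->|->].
Qed.

Lemma passes_all : (0 < n)%N -> passes [ffun _ : 'I_n => true].
Proof.
move=> n_gt0; rewrite /passes.
have -> : [set i | [ffun _ : 'I_n => true] i] = setT by apply/setP => i; rewrite !inE ffunE.
by rewrite cardsT card_ord; lia.
Qed.

Lemma passes_none : ~~ passes [ffun _ : 'I_n => false].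
Proof.
rewrite /passes.
have -> : [set i | [ffun _ : 'I_n => false] i] = set0 by apply/setP => i; rewrite !inE ffunE.
by rewrite cards0.
Qed.

End Majority.

Section AmendmentGame.
Variables (R : realType) (X : finType) (n : nat).
Variables (u : 'I_n -> X -> R) (uA : X -> R).

Local Notation phi := (phi u uA).
Local Notation Mset := (Mset u).
Local Notation strat := (strat R X n).
Local Notation history := (history X n).

Definition dirac (x : X) : X -> R := fun z => (z == x)%:R.

Lemma EU_dirac (w : X -> R) x : EU w (dirac x) = w x.
Proof. exact: sum_indicator_mull. Qed.

Lemma eq_EU (w F G : X -> R) : F =1 G -> EU w F = EU w G.
Proof. by move=> FG; apply: eq_bigr => z _; rewrite FG. Qed.

Lemma EU_mix (w : X -> R) (J : finType) (c : J -> R) (F : J -> X -> R) :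
  EU w (fun z => \sum_j c j * F j z) = \sum_j c j * EU w (F j).
Proof.
rewrite /EU; under eq_bigr do rewrite mulr_suml.
rewrite exchange_big; apply: eq_bigr => j _; rewrite mulr_sumr.
by apply: eq_bigr => z _; rewrite mulrA.
Qed.

Lemma EU_node_val (w : X -> R) x0 (s : strat) h k :
  EU w (node_val x0 s h k.+1) = \sum_a sA s h a * EU w (vote_val x0 s h a k).
Proof. exact: EU_mix. Qed.

Lemma EU_vote_val (w : X -> R) x0 (s : strat) h a k :
  EU w (vote_val x0 s h a k) =
  \sum_v vprob s h a v * EU w (node_val x0 s (rcons h (a, v)) k).
Proof. exact: EU_mix. Qed.

Lemma vprobE (s : strat) h a v : vprob s h a v = bernoulli_prod (fun i => sV s i h a) v.
Proof. by []. Qed.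

Lemma sum_vprob (s : strat) h a : \sum_v vprob s h a v = 1.
Proof. exact: sum_bernoulli_prod. Qed.

Lemma default_rcons x0 (h : history) a v :
  default x0 (rcons h (a, v)) = if passes v then a else default x0 h.
Proof. by rewrite /default -cats1 foldl_cat. Qed.

Lemma node_val_ext x0 k (h : history) (s1 s2 : strat) :
  (forall h', (size h <= size h')%N ->
     sA s1 h' = sA s2 h' /\ forall i, sV s1 i h' = sV s2 i h') ->
  node_val x0 s1 h k =1 node_val x0 s2 h k.
Proof.
elim: k h => [|k IHk] h s12 z //=.
have [-> sV12] := s12 h (leqnn _).
apply: eq_bigr => a _; congr (_ * _); apply: eq_bigr => v _.
rewrite (IHk (rcons h (a, v))) => [|h']; last by rewrite size_rcons => /ltnW; apply: s12.
by congr (_ * _); apply: eq_bigr => i _; rewrite sV12.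
Qed.

Lemma vote_val_pure x0 (s : strat) h a k (v0 : vprofile n) (F : vprofile n -> X) :
  (forall i, sV s i h a = (v0 i)%:R) ->
  (forall v, node_val x0 s (rcons h (a, v)) k =1 dirac (F v)) ->
  vote_val x0 s h a k =1 dirac (F v0).
Proof.
move=> pure_v0 det z; rewrite /vote_val.
under eq_bigr do rewrite vprobE (bernoulli_prod_pure pure_v0) det.
exact: sum_indicator_mull.
Qed.

Lemma dirac_inj (x y : X) : dirac x =1 dirac y -> x = y.
Proof. by move/(_ x); rewrite /dirac eqxx; case: eqP => // _ /eqP; rewrite eqr_nat. Qed.

Lemma vote_val_const x0 (s : strat) h a k c :
  (forall v, node_val x0 s (rcons h (a, v)) k =1 dirac c) -> vote_val x0 s h a k =1 dirac c.
Proof.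
move=> det z; rewrite /vote_val; under eq_bigr do rewrite det.
by rewrite -mulr_suml sum_vprob mul1r.
Qed.

Lemma EU_vote_val_pure (w : X -> R) x0 (s : strat) h a k (v0 : vprofile n) :
  (forall i, sV s i h a = (v0 i)%:R) ->
  EU w (vote_val x0 s h a k) = EU w (node_val x0 s (rcons h (a, v0)) k).
Proof.
move=> pure_v0; rewrite EU_vote_val.
under eq_bigr do rewrite vprobE (bernoulli_prod_pure pure_v0).
exact: sum_indicator_mull.
Qed.

Lemma valid_sA_pure_at (f : history -> X -> R) h b :
  valid_sA f -> valid_sA (fun h' => if h' == h then dirac b else f h').
Proof.
move=> f_valid h'; case: eqP => _; last exact: f_valid.
split=> [a|]; first by rewrite /dirac ler0n.
rewrite -(sum_indicator_mull b (fun=> 1)).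
by apply: eq_bigr => a _; rewrite mulr1.
Qed.

Lemma node_val_setA_pure x0 (s : strat) h b k :
  node_val x0 (setA s (fun h' => if h' == h then dirac b else sA s h')) h k.+1 =1
  vote_val x0 s h b k.
Proof.
move=> z; rewrite /= eqxx (sum_indicator_mull b (fun a => \sum_v _ * _)).
apply: eq_bigr => v _; congr (_ * _); apply: node_val_ext => h'.
rewrite size_rcons /= => hh'; split=> //.
by case: eqP => // h'h; rewrite h'h ltnn in hh'.
Qed.

Lemma Mset_refl x : x \in Mset x.
Proof. by rewrite inE /= eqxx orbT. Qed.

Lemma phiP x : phi x \in Mset x /\ forall y, y \in Mset x -> uA y <= uA (phi x).
Proof. by rewrite /Defs.phi; case: arg_maxP => //; apply: Mset_refl. Qed.

Lemma phi_ge x : uA x <= uA (phi x).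
Proof. by apply: (phiP x).2; apply: Mset_refl. Qed.

Hypothesis uA_inj : injective uA.

Lemma phi_gt x : phi x != x -> uA x < uA (phi x).
Proof. by move=> phix; rewrite lt_neqAle phi_ge andbT (inj_eq uA_inj) eq_sym. Qed.

Definition sincere (x y : X) : vprofile n := [ffun i => u i y <= u i x].

Definition sincere_outcome (x y : X) : X := if passes (sincere x y) then x else y.

Hypothesis u_inj : forall i, injective (u i).

Lemma passes_sincere x y : x != y -> passes (sincere x y) = maj u x y.
Proof.
move=> xy; rewrite /passes /maj; congr (_ < 2 * _)%N; apply: eq_card => i.
by rewrite !inE ffunE le_eqVlt (inj_eq (@u_inj i)) eq_sym (negbTE xy).
Qed.

Lemma sincere_outcome_Mset x y : sincere_outcome x y \in Mset y.
Proof.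
rewrite /sincere_outcome; case: ifP => [pass|_]; last exact: Mset_refl.
have [->|xy] := eqVneq x y; first exact: Mset_refl.
by rewrite inE /= -passes_sincere // pass.
Qed.

Lemma sincere_outcome_id x y : x \in Mset y -> sincere_outcome x y = x.
Proof.
rewrite /sincere_outcome; have [->|xy] := eqVneq x y; first by case: ifP.
by rewrite inE /= (negbTE xy) orbF -passes_sincere // => ->.
Qed.

Lemma sincere_outcome_pivot i x y (v : vprofile n) :
  (forall j, j != i -> v j = sincere x y j) ->
  u i (if passes v then x else y) <= u i (sincere_outcome x y).
Proof.
move=> v_sincere; rewrite /sincere_outcome.
case: ifP => pass_v; case: ifP => pass_s //.
- have /andP[_] := pivotal_voter v_sincere pass_v (negbT pass_s).
  by rewrite ffunE -ltNge => /ltW.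
- have /andP[] := pivotal_voter (fun j ji => esym (v_sincere j ji)) pass_s (negbT pass_v).
  by rewrite ffunE.
Qed.

Lemma sincere_outcome_phi k x :
  sincere_outcome (iter k phi (phi x)) (iter k phi x) = iter k.+1 phi x.
Proof. by rewrite -iterSr iterS sincere_outcome_id //; apply: (phiP _).1. Qed.

Lemma sincere_outcome_le k a x :
  uA (sincere_outcome (iter k phi a) (iter k phi x)) <= uA (iter k.+1 phi x).
Proof. by apply: (phiP _).2; apply: sincere_outcome_Mset. Qed.

Lemma vote_val_sincere x0 (s : strat) h a k :
  (forall i, sV s i h a = (sincere (iter k phi a) (iter k phi (default x0 h)) i)%:R) ->
  (forall v, node_val x0 s (rcons h (a, v)) k =1
               dirac (iter k phi (default x0 (rcons h (a, v))))) ->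
  vote_val x0 s h a k =1 dirac (sincere_outcome (iter k phi a) (iter k phi (default x0 h))).
Proof.
move=> sincere_vote det z.
rewrite (vote_val_pure (F := fun v => iter k phi (if passes v then a else default x0 h))
  sincere_vote) => [|v]; first by rewrite /sincere_outcome; case: ifP.
by rewrite -default_rcons; apply: det.
Qed.

Section PhiStrategy.
Variables (x0 : X) (T : nat).

Definition phi_strategy : strat :=
  Strat (fun h => dirac (phi (default x0 h)))
    (fun i h a => let k := (T - size h - 1)%N in
       (sincere (iter k phi a) (iter k phi (default x0 h)) i)%:R).

Local Notation s := phi_strategy.

Lemma sV_phi_strategy k h i a : (k.+1 + size h)%N = T ->
  sV s i h a = (sincere (iter k phi a) (iter k phi (default x0 h)) i)%:R.
Proof. by move=> hT /=; have -> : (T - size h - 1 = k)%N by lia. Qed.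

Lemma node_val_phi_strategy k h : (k + size h)%N = T ->
  node_val x0 s h k =1 dirac (iter k phi (default x0 h)).
Proof.
elim: k h => [|k IHk] h hT z //.
rewrite -sincere_outcome_phi [LHS]/=.
rewrite (sum_indicator_mull (phi (default x0 h)) (fun a => vote_val x0 s h a k z)).
apply: vote_val_sincere => [i|v]; first exact: sV_phi_strategy.
by apply: IHk; rewrite size_rcons addnS.
Qed.

Lemma vote_val_phi_strategy k h a : (k.+1 + size h)%N = T ->
  vote_val x0 s h a k =1 dirac (sincere_outcome (iter k phi a) (iter k phi (default x0 h))).
Proof.
move=> hT; apply: vote_val_sincere => [i|v]; first exact: sV_phi_strategy.
by apply: node_val_phi_strategy; rewrite size_rcons addnS.
Qed.

Lemma setter_vote_bound f k h a : (k.+1 + size h)%N = T ->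
  (forall h', (k + size h')%N = T ->
     EU uA (node_val x0 (setA s f) h' k) <= uA (iter k phi (default x0 h'))) ->
  EU uA (vote_val x0 (setA s f) h a k) <=
    uA (sincere_outcome (iter k phi a) (iter k phi (default x0 h))).
Proof.
move=> hT node_bound.
have sincere_votes i : sV (setA s f) i h a = _ := sV_phi_strategy i a hT.
rewrite (EU_vote_val_pure _ _ _ sincere_votes).
apply: le_trans (node_bound _ _) _; first by rewrite size_rcons addnS.
by rewrite default_rcons /sincere_outcome; case: ifP.
Qed.

Lemma setter_node_bound f : valid_sA f -> forall k h, (k + size h)%N = T ->
  EU uA (node_val x0 (setA s f) h k) <= uA (iter k phi (default x0 h)).
Proof.
move=> f_valid; elim=> [|k IHk] h hT; first by rewrite [EU _ _](EU_dirac _ (default x0 h)).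
have [f_ge0 f_sum1] := f_valid h; rewrite EU_node_val.
apply: convex_le => // a _; apply: le_trans (sincere_outcome_le k a _).
exact: setter_vote_bound.
Qed.

Lemma voter_vote_bound i g k h a : valid_sV g -> (k.+1 + size h)%N = T ->
  (forall h', (k + size h')%N = T ->
     EU (u i) (node_val x0 (setV s i g) h' k) <= u i (iter k phi (default x0 h'))) ->
  EU (u i) (vote_val x0 (setV s i g) h a k) <=
    u i (sincere_outcome (iter k phi a) (iter k phi (default x0 h))).
Proof.
move=> g_valid hT node_bound; rewrite EU_vote_val.
have votes01 j : 0 <= sV (setV s i g) j h a <= 1.
  rewrite /=; case: eqP => _; first exact: g_valid.
  by case: (sincere _ _ j); rewrite ?lexx ?ler01.
apply: le_trans (_ : \sum_v vprob (setV s i g) h a v *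
    u i (iter k phi (if passes v then a else default x0 h)) <= _).
  apply: ler_sum => v _; rewrite ler_wpM2l ?vprobE ?bernoulli_prod_ge0 //.
  by rewrite -default_rcons; apply: node_bound; rewrite size_rcons addnS.
apply: convex_le => [v||v]; rewrite ?vprobE ?bernoulli_prod_ge0 ?sum_bernoulli_prod //.
move=> /bernoulli_prod_neq0 others_sincere; rewrite (fun_if (iter k phi)).
apply: sincere_outcome_pivot => j ji; apply: others_sincere ji => {}j ji.
by rewrite /= (negbTE ji); apply: sV_phi_strategy.
Qed.

Lemma voter_node_bound i g : valid_sV g -> forall k h, (k + size h)%N = T ->
  EU (u i) (node_val x0 (setV s i g) h k) <= u i (iter k phi (default x0 h)).
Proof.
move=> g_valid; elim=> [|k IHk] h hT; first by rewrite [EU _ _](EU_dirac _ (default x0 h)).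
rewrite EU_node_val (sum_indicator_mull (phi (default x0 h))
  (fun a => EU (u i) (vote_val x0 (setV s i g) h a k))) -sincere_outcome_phi.
by apply: voter_vote_bound.
Qed.

Lemma phi_strategy_valid : valid s.
Proof.
split=> [h|i h a /=]; last by case: (sincere _ _ i); rewrite ?lexx ?ler01.
split=> [a|]; first by rewrite /dirac ler0n.
rewrite -(sum_indicator_mull (phi (default x0 h)) (fun=> 1)).
by apply: eq_bigr => a _; rewrite mulr1.
Qed.

Lemma phi_strategy_SPE : SPE u uA x0 T s.
Proof.
split; first exact: phi_strategy_valid.
split=> h hT.
all: have node_hT : (T - size h + size h)%N = T by lia.
all: have vote_hT : ((T - size h - 1).+1 + size h)%N = T by lia.
- move=> f f_valid; rewrite (eq_EU _ (node_val_phi_strategy node_hT)) EU_dirac.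
  split=> [|a]; first exact: setter_node_bound.
  rewrite (eq_EU _ (vote_val_phi_strategy a vote_hT)) EU_dirac.
  by apply: setter_vote_bound => // h' hh'; apply: setter_node_bound.
- move=> i g g_valid; rewrite (eq_EU _ (node_val_phi_strategy node_hT)) EU_dirac.
  split=> [|a]; first exact: voter_node_bound.
  rewrite (eq_EU _ (vote_val_phi_strategy a vote_hT)) EU_dirac.
  by apply: voter_vote_bound => // h' hh'; apply: voter_node_bound.
Qed.

Lemma phi_strategy_as_if_pivotal : (0 < n)%N -> as_if_pivotal u x0 T s.
Proof.
move=> n_gt0 h hT a x y pass_x reject_y i.
have vote_hT : ((T - size h - 1).+1 + size h)%N = T by lia.
set k := (T - size h - 1)%N in pass_x reject_y vote_hT *.
have cont v : node_val x0 s (rcons h (a, v)) k =1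
    dirac (iter k phi (if passes v then a else default x0 h)).
  by rewrite -default_rcons; apply: node_val_phi_strategy; rewrite size_rcons addnS.
have -> : x = iter k phi a.
  apply: dirac_inj => z; rewrite /dirac -(pass_x _ (passes_all n_gt0)) cont.
  by rewrite passes_all.
have -> : y = iter k phi (default x0 h).
  apply: dirac_inj => z; rewrite /dirac -(reject_y _ (passes_none n)) cont.
  by rewrite (negbTE (passes_none n)).
rewrite (sV_phi_strategy _ _ vote_hT) ffunE.
by split=> [/ltW -> // | ]; rewrite ltNge => /negbTE ->.
Qed.

Lemma phi_strategy_equilibrium : (0 < n)%N -> equilibrium u uA x0 T s.
Proof.
by move=> n_gt0; split; [apply: phi_strategy_SPE | apply: phi_strategy_as_if_pivotal].
Qed.

End PhiStrategy.

Section EquilibriumOutcome.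
Variables (x0 : X) (T : nat) (s : strat).
Hypothesis s_equilibrium : equilibrium u uA x0 T s.

Lemma equilibrium_vote_val k h a : (k.+1 + size h)%N = T ->
  (forall h', (k + size h')%N = T ->
     node_val x0 s h' k =1 dirac (iter k phi (default x0 h'))) ->
  vote_val x0 s h a k =1 dirac (sincere_outcome (iter k phi a) (iter k phi (default x0 h))).
Proof.
move=> hT node_det.
have cont v : node_val x0 s (rcons h (a, v)) k =1
    dirac (iter k phi (default x0 (rcons h (a, v)))).
  by apply: node_det; rewrite size_rcons addnS.
have [same|differ] := eqVneq (iter k phi a) (iter k phi (default x0 h)).
  have -> : sincere_outcome (iter k phi a) (iter k phi (default x0 h)) = iter k phi a.
    by rewrite /sincere_outcome same if_same.
  apply: vote_val_const => v z; rewrite cont default_rcons.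
  by rewrite (fun_if (iter k phi)) -same if_same.
suff sincere_votes i : sV s i h a =
    (sincere (iter k phi a) (iter k phi (default x0 h)) i)%:R by apply: vote_val_sincere.
rewrite ffunE.
have k_def : (T - size h - 1 = k)%N by lia.
have [_ /(_ h) pivotal] := s_equilibrium.
have [|||prefer_a prefer_d] := pivotal _ a (iter k phi a) (iter k phi (default x0 h)) _ _ i.
- by lia.
- by move=> v pass z; rewrite k_def cont default_rcons pass.
- by move=> v /negbTE reject z; rewrite k_def cont default_rcons reject.
have [lt_da|lt_ad|/(@u_inj i) eq_ad] :=
  ltgtP (u i (iter k phi (default x0 h))) (u i (iter k phi a)).
- by rewrite prefer_a // (ltW lt_da).
- by rewrite prefer_d // leNgt lt_ad.
- by rewrite eq_ad eqxx in differ.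
Qed.

Lemma equilibrium_node_val k h : (k + size h)%N = T ->
  node_val x0 s h k =1 dirac (iter k phi (default x0 h)).
Proof.
elim: k h => [|k IHk] h hT z //.
have vote_det a := equilibrium_vote_val a hT IHk.
have [[s_valid [setter_opt _]] _] := s_equilibrium.
have [sA_ge0 sA_sum1] := s_valid.1 h.
set d := default x0 h.
have hlt : (size h < T)%N by lia.
(* the setter does not gain by proposing phi(d) for sure *)
have [+ _] := setter_opt h hlt _ (valid_sA_pure_at h (phi d) s_valid.1).
rewrite (_ : (T - size h)%N = k.+1); last by lia.
rewrite (eq_EU _ (node_val_setA_pure _ _ _ _ _)) (eq_EU _ (vote_det _)) EU_dirac.
rewrite sincere_outcome_phi EU_node_val.
under eq_bigr do rewrite (eq_EU _ (vote_det _)) EU_dirac.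
move=> /(convex_ge_max sA_ge0 sA_sum1 (fun a => sincere_outcome_le k a d)) on_support.
change (\sum_a sA s h a * vote_val x0 s h a k z = dirac (iter k.+1 phi d) z).
rewrite -[dirac _ z]mul1r -sA_sum1 mulr_suml; apply: eq_bigr => a _.
have [->|/on_support/uA_inj] := eqVneq (sA s h a) 0; first by rewrite !mul0r.
by rewrite vote_det => ->.
Qed.

End EquilibriumOutcome.

Lemma fT_iter T x0 x : (0 < n)%N -> fT u uA T x0 x <-> x = iter T phi x0.
Proof.
move=> n_gt0; have T_def : (T + size ([::] : history))%N = T by rewrite addn0.
split=> [[s [s_eq]]|->].
  by rewrite (equilibrium_node_val s_eq T_def) /dirac; case: eqP; rewrite ?ltxx.
exists (phi_strategy x0 T); split; first exact: phi_strategy_equilibrium.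
by rewrite (node_val_phi_strategy x0 T_def) /dirac eqxx ltr01.
Qed.

Lemma fT_self T x0 : (0 < n)%N -> (0 < T)%N ->
  (forall x, fT u uA T x0 x <-> x = x0) <-> x0 \in Eset u uA.
Proof.
move=> n_gt0 T_gt0; rewrite inE; split=> [fT_x0 | /eqP fixed x].
  apply/eqP/(iter_eq_fixed phi_gt T_gt0).
  by apply/esym/(fT_iter _ _ _ n_gt0).1/(fT_x0 x0).2.
by rewrite fT_iter // iter_fix.
Qed.

Lemma fT_range T x : (0 < n)%N -> (#|X| - 1 <= T)%N ->
  (exists x0, fT u uA T x0 x) <-> x \in Eset u uA.
Proof.
move=> n_gt0 T_big; rewrite inE; split=> [[x0 /(fT_iter _ _ _ n_gt0) ->] | /eqP fixed].
  by apply/eqP/(iter_card_fixed phi_gt).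
by exists x; rewrite fT_iter // iter_fix.
Qed.

End AmendmentGame.

Theorem lemma1 (R : realType) (X : finType) (n : nat)
    (u : 'I_n -> X -> R) (uA : X -> R) (T : nat) :
  odd n ->
  (forall i, injective (u i)) ->
  injective uA ->
  (0 < T)%N ->
  (* main claim: f_T(x0) = {phi^T(x0)} *)
  (forall x0 x, fT u uA T x0 x <-> x = iter T (phi u uA) x0) /\
  (* (a) the described pure-strategy equilibrium *)
  (forall x0, exists s : strat R X n,
     equilibrium u uA x0 T s /\
     (forall h : history X n, (size h < T)%N ->
        forall a, sA s h a = (a == phi u uA (default x0 h))%:R) /\
     (forall h : history X n, (size h < T)%N -> forall i a,
        sV s i h a =
          (u i (iter (T - size h - 1) (phi u uA) (default x0 h))
             <= u i (iter (T - size h - 1) (phi u uA) a))%R%:R)) /\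
  (* (b) *)
  (forall x0, (forall x, fT u uA T x0 x <-> x = x0) <-> x0 \in Eset u uA) /\
  (* (c) *)
  ((#|X| - 1 <= T)%N ->
     forall x, (exists x0, fT u uA T x0 x) <-> x \in Eset u uA).
Proof.
move=> n_odd u_inj uA_inj T_gt0; have n_gt0 := odd_gt0 n_odd.
split; first by move=> x0 x; apply: fT_iter.
split.
  move=> x0; exists (phi_strategy u uA x0 T).
  split; first exact: phi_strategy_equilibrium.
  by split=> // h _ i a; rewrite /= ffunE.
split; first by move=> x0; apply: fT_self.
by move=> T_big x; apply: fT_range.
Qed.
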